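(* Let $p/q$ be an even rational parameter and $P=2p/(p+q)$. For every unit square $S$ of the integer grid, with center $c$, the set of good edges of $S$ (its grid light set) coincides with the set of edges of $S$ named by the letters in the label of the piece of the partition of $X_P$ containing $\Xi_P(c)$ (its tile light set).
   Context: Grid description. An even rational parameter is a rational $p/q\in(0,1)$, $p,q$ positive coprime integers, $pq$ even. Put $\omega=p+q$, $P=2p/\omega$, $Q=2q/\omega$. Line families: $\mathcal H$ = lines $y=n$, $\mathcal V$ = lines $x=n$ ($n\in\mathbb Z$), $\mathcal P$ = lines of slope $-P$ with integer $y$-intercept, $\mathcal Q$ = lines of slope $-Q$ with integer $y$-intercept. Functions mod $2\mathbb Z$, values represented in $(-1,1]$: $F_H=2Py$, $F_V=2Px$, $F_P=Py+P^2x+1$, $F_Q=Py+PQx+1$. A unit segment is an edge of a unit square of the integer grid; horizontal ones lie on $\mathcal H$-lines (set $A=H$), vertical ones on $\mathcal V$-lines (set $A=V$). A point $z$ of a unit segment $s$ is a light point of $s$ if for some $B\in\{P,Q\}$, $z$ lies on a line of $\mathcal B$, $F_A(z)F_B(z)>0$ and $|F_B(z)|<|F_A(z)|$. The light count of $s$ is the number of distinct light points of $s$, a light point that is the midpoint of a horizontal $s$ being counted twice; $s$ is good if its light count is $1$. The edges of a unit square are called N, S, E, W (north, south, east, west). Tile description. Let $\Lambda_P\subset\mathbb R^3$ be the lattice generated by $(2,P,P),(0,2,0),(0,0,2)$, $X_P=\mathbb R^3/\Lambda_P$ with coordinates $(T,U_1,U_2)$ and fundamental domain $[-1,1]^3$,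 and $\Xi_P(x,y)=(2Px+2y,2Px,2Px+2Py)\bmod\Lambda_P$. Each fiber $\{T\}\times[-1,1]^2$ ($T\in[-1,1]$) is partitioned as follows: given $u_1\le u_2\le u_3$, the lines $U_1=u_i$, $U_2=u_i$ ($i=1,2,3$) cut $[-1,1]^2$ into a $4\times4$ grid of rectangles, indexed by (column $a$, row $b$), $a,b\in\{1,..,4\}$, columns counted in increasing $U_1$ and rows in increasing $U_2$. Four of these are special, each labeled by one letter, with positions: for $T\in[-1,-1+P]$: $(u_1,u_2,u_3)=(T,1-P,2-P+T)$, W at $(4,4)$, N at $(1,3)$, E at $(2,2)$, S at $(3,1)$; for $T\in[-1+P,1-P]$: $(u_1,u_2,u_3)=(-1+P,T,1-P)$, N at $(1,4)$, E at $(3,3)$, W at $(2,2)$, S at $(4,1)$; for $T\in[1-P,1]$: $(u_1,u_2,u_3)=(-2+P+T,-1+P,T)$, N at $(2,4)$, W at $(3,3)$, S at $(4,2)$, E at $(1,1)$. Each non-special rectangle is labeled by the unordered pair $\{X,Y\}$ where $X$ is the letter of the special rectangle in its column and $Y$ that of the special rectangle in its row; special rectangles get the empty label. The pieces of the partition of $X_P$ are, for each of the seven labels, the union over all fibers of the rectangles with that label. For a tile center $c\in\{(m+\frac12,n+\frac12)\}$, the point $\Xi_P(c)$ (represented in $[-1,1]^3$) lies in the interior of a unique piece (this is known to hold for even rational parameters), so its label is well defined; the tile light set of the square centered at $c$ is the set of edges whose letters occur in that label (empty for the empty label). *)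

From Stdlib Require Import Reals Lra Lia ZArith List Arith.
Open Scope R_scope.

Definition even_rational_param (p q : nat) : Prop :=
  (0 < p)%nat /\ (p < q)%nat /\ Nat.gcd p q = 1%nat /\ Nat.Even (p * q).

Definition omega (p q : nat) : R := INR p + INR q.
Definition Ppar (p q : nat) : R := 2 * INR p / omega p q.
Definition Qpar (p q : nat) : R := 2 * INR q / omega p q.

(* Reduction mod 2Z with representative in (-1,1]. *)
Definition red2 (x : R) : R := x + 2 * IZR (Int_part ((1 - x) / 2)).

Definition point := (R * R)%type.

Definition F_H (P : R) (z : point) : R := red2 (2 * P * snd z).
Definition F_V (P : R) (z : point) : R := red2 (2 * P * fst z).
Definition F_P (P : R) (z : point) : R := red2 (P * snd z + P ^ 2 * fst z + 1).
Definition F_Q (P Q : R) (z : point) : R := red2 (P * snd z + P * Q * fst z + 1).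

Definition on_slope_line (s : R) (z : point) : Prop :=
  exists k : Z, snd z = - s * fst z + IZR k.

(* Hseg m n : segment from (m,n) to (m+1,n); Vseg m n : from (m,n) to (m,n+1). *)
Inductive segment := Hseg (m n : Z) | Vseg (m n : Z).

Definition on_seg (s : segment) (z : point) : Prop :=
  match s with
  | Hseg m n => IZR m <= fst z <= IZR m + 1 /\ snd z = IZR n
  | Vseg m n => fst z = IZR m /\ IZR n <= snd z <= IZR n + 1
  end.

Definition F_A (P : R) (s : segment) (z : point) : R :=
  match s with Hseg _ _ => F_H P z | Vseg _ _ => F_V P z end.

Definition is_light_point (P Q : R) (s : segment) (z : point) : Prop :=
  on_seg s z /\
  ((on_slope_line P z /\ F_A P s z * F_P P z > 0 /\ Rabs (F_P P z) < Rabs (F_A P s z)) \/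
   (on_slope_line Q z /\ F_A P s z * F_Q P Q z > 0 /\ Rabs (F_Q P Q z) < Rabs (F_A P s z))).

Definition hmid_weight (s : segment) (z : point) : nat :=
  match s with
  | Hseg m n =>
      if Req_EM_T (fst z) (IZR m + /2) then
        if Req_EM_T (snd z) (IZR n) then 2%nat else 1%nat
      else 1%nat
  | Vseg _ _ => 1%nat
  end.

Fixpoint weighted_count (s : segment) (l : list point) : nat :=
  match l with
  | nil => 0%nat
  | z :: l' => (hmid_weight s z + weighted_count s l')%nat
  end.

Definition light_count (P Q : R) (s : segment) (n : nat) : Prop :=
  exists l : list point,
    NoDup l /\ (forall z, In z l <-> is_light_point P Q s z) /\ weighted_count s l = n.

Definition good (P Q : R) (s : segment) : Prop := light_count P Q s 1.

Inductive edge := eN | eS | eE | eW.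

(* the unit square [m,m+1] x [n,n+1] *)
Definition edge_seg (m n : Z) (e : edge) : segment :=
  match e with
  | eN => Hseg m (n + 1)
  | eS => Hseg m n
  | eE => Vseg (m + 1) n
  | eW => Vseg m n
  end.

Definition center (m n : Z) : point := (IZR m + /2, IZR n + /2).

Inductive regime := Reg1 | Reg2 | Reg3.

Definition regime_applies (P : R) (r : regime) (T : R) : Prop :=
  match r with
  | Reg1 => -1 <= T <= -1 + P
  | Reg2 => -1 + P <= T <= 1 - P
  | Reg3 => 1 - P <= T <= 1
  end.

Definition cuts (P : R) (r : regime) (T : R) : R * R * R :=
  match r with
  | Reg1 => (T, 1 - P, 2 - P + T)
  | Reg2 => (-1 + P, T, 1 - P)
  | Reg3 => (-2 + P + T, -1 + P, T)
  end.

(* positions (column, row) of the special rectangles *)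
Definition spec_pos (r : regime) (e : edge) : nat * nat :=
  match r, e with
  | Reg1, eW => (4, 4) | Reg1, eN => (1, 3) | Reg1, eE => (2, 2) | Reg1, eS => (3, 1)
  | Reg2, eN => (1, 4) | Reg2, eE => (3, 3) | Reg2, eW => (2, 2) | Reg2, eS => (4, 1)
  | Reg3, eN => (2, 4) | Reg3, eW => (3, 3) | Reg3, eS => (4, 2) | Reg3, eE => (1, 1)
  end%nat.

Definition band (u : R * R * R) (a : nat) (x : R) : Prop :=
  let '(u1, u2, u3) := u in
  match a with
  | 1%nat => -1 <= x <= u1
  | 2%nat => u1 <= x <= u2
  | 3%nat => u2 <= x <= u3
  | 4%nat => u3 <= x <= 1
  | _ => False
  end.

Definition rect_label (r : regime) (a b : nat) (e : edge) : Prop :=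
  (fst (spec_pos r e) = a \/ snd (spec_pos r e) = b) /\
  ~ (exists e', spec_pos r e' = (a, b)).

(* A label is represented by its set of letters L : edge -> Prop.
   (T,U1,U2) in [-1,1]^3 lies in the (closed) piece with label L. *)
Definition in_fiber_piece (P : R) (L : edge -> Prop) (T U1 U2 : R) : Prop :=
  exists (r : regime) (a b : nat),
    regime_applies P r T /\
    band (cuts P r T) a U1 /\ band (cuts P r T) b U2 /\
    (forall e, L e <-> rect_label r a b e).

(* Lift to R^3 of the piece with label L of X_P = R^3 / Lambda_P,
   Lambda_P generated by (2,P,P), (0,2,0), (0,0,2). *)
Definition in_piece (P : R) (L : edge -> Prop) (v : R * R * R) : Prop :=
  let '(T, U1, U2) := v in
  exists i j k : Z,
    let T' := T - 2 * IZR i in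
    let U1' := U1 - P * IZR i - 2 * IZR j in
    let U2' := U2 - P * IZR i - 2 * IZR k in
    -1 <= T' <= 1 /\ -1 <= U1' <= 1 /\ -1 <= U2' <= 1 /\
    in_fiber_piece P L T' U1' U2'.

Definition in_piece_interior (P : R) (L : edge -> Prop) (v : R * R * R) : Prop :=
  let '(T, U1, U2) := v in
  exists eps : R, eps > 0 /\
    forall T' U1' U2' : R,
      Rabs (T' - T) < eps -> Rabs (U1' - U1) < eps -> Rabs (U2' - U2) < eps ->
      in_piece P L (T', U1', U2').

Definition Xi (P : R) (z : point) : R * R * R :=
  (2 * P * fst z + 2 * snd z, 2 * P * fst z, 2 * P * fst z + 2 * P * snd z).

From Stdlib Require Import Reals Lra Lia List Bool.
Open Scope R_scope.

(* Let W = p + q, which is odd, so that P = 2p/W and Q = 2 - P.  Put a = frac (P m)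
   for the square [m, m+1] x [n, n+1]; modulo Lambda_P the point Xi_P(c) is
   (2a + P - 1, U1, U2) for explicit reductions U1, U2.

   Grid side: a vertical edge carries at most two light-point candidates and a
   horizontal edge at most four, and at each candidate the values of F_A and F_B are,
   modulo 2, affine in a, U1, U2 and P.  So goodness of an edge is a Boolean
   combination of conditions "F_B lies strictly between 0 and F_A" on these reduced
   values.  Tile side: the label of Xi_P(c) is determined by where 2a + P - 1, U1 and
   U2 sit relative to the cuts.  Matching the two is a finite case analysis, each case
   closed by linear arithmetic.

   Everything lives in (1/W) Z with prescribed parities of numerators: the F_P and
   F_Q values and the cuts are odd, the F_H and F_V values and the U-coordinates even.
   Hence no light-point condition is borderline, and Xi_P(c) keeps distance at least
   1/W from every cut it does not lie on, so it is interior to a single piece. *)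

Lemma IZR_small (z : Z) : -1 < IZR z < 1 -> z = 0%Z.
Proof. intros [H1 H2]. apply lt_IZR in H1. apply lt_IZR in H2. lia. Qed.

Lemma Int_part_bounds r : IZR (Int_part r) <= r < IZR (Int_part r) + 1.
Proof. destruct (base_Int_part r). lra. Qed.

Lemma Int_part_unique r k : IZR k <= r < IZR k + 1 -> Int_part r = k.
Proof.
  intros H. destruct (Int_part_bounds r).
  assert (Int_part r - k = 0)%Z by (apply IZR_small; rewrite minus_IZR; lra).
  lia.
Qed.

Lemma red2_bounds x : -1 < red2 x <= 1.
Proof. unfold red2. destruct (Int_part_bounds ((1 - x) / 2)). lra. Qed.

Lemma red2_mod2 x : exists k, red2 x = x + 2 * IZR k.
Proof. eexists; reflexivity. Qed.

Lemma red2_unique x y k : -1 < y <= 1 -> y = x + 2 * IZR k -> red2 x = y.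
Proof.
  intros Hy Hk. pose proof (red2_bounds x). destruct (red2_mod2 x) as [k' Hk'].
  assert (k - k' = 0)%Z by (apply IZR_small; rewrite minus_IZR; lra).
  assert (k = k') by lia. subst. lra.
Qed.

Lemma red2_shift x y k : x = y + 2 * IZR k -> red2 x = red2 y.
Proof.
  intros ->. pose proof (red2_bounds y). destruct (red2_mod2 y) as [k' Hk'].
  apply (red2_unique _ _ (k' - k)); [lra|]. rewrite minus_IZR. lra.
Qed.

Lemma red2_id x : -1 < x <= 1 -> red2 x = x.
Proof. intros H. apply (red2_unique _ _ 0); simpl; lra. Qed.

(* [F] is the reduction mod 2 of [X], and [X] is within 6 of [F]: the form in
   which [lra] can case-split on the unknown reduction. *)
Definition reduces_to (X F : R) : Prop := -1 < F <= 1 /\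
  (F = X \/ F = X - 2 \/ F = X + 2 \/ F = X - 4 \/ F = X + 4 \/ F = X - 6 \/ F = X + 6).

Lemma reduces_to_red2 x y : y = x -> -7 < x < 7 -> reduces_to x (red2 y).
Proof.
  intros -> Hx. pose proof (red2_bounds x) as Hr. destruct (red2_mod2 x) as [k Hk].
  split; [exact Hr|].
  assert (-4 < IZR k < 4) as [Hb1 Hb2] by lra.
  apply lt_IZR in Hb1. apply lt_IZR in Hb2.
  assert (k = -3 \/ k = -2 \/ k = -1 \/ k = 0 \/ k = 1 \/ k = 2 \/ k = 3)%Z as Hc by lia.
  destruct Hc as [->|[->|[->|[->|[->|[->| ->]]]]]]; simpl in Hk; lra.
Qed.

Definition between0 (h F : R) : Prop := 0 < F < h \/ h < F < 0.
Definition xor (A B : Prop) : Prop := (A /\ ~ B) \/ (B /\ ~ A).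

Lemma between0_iff h F : (h * F > 0 /\ Rabs F < Rabs h) <-> between0 h F.
Proof.
  unfold between0. split.
  - intros [H1 H2].
    destruct (Rlt_le_dec 0 h); destruct (Rlt_le_dec 0 F); try (exfalso; nra).
    + rewrite (Rabs_right h), (Rabs_right F) in H2 by lra. lra.
    + assert (h <> 0) by (intros ->; nra). assert (F <> 0) by (intros ->; nra).
      rewrite (Rabs_left h), (Rabs_left F) in H2 by lra. lra.
  - intros [H|H]; (split; [nra|]).
    + rewrite (Rabs_right h), (Rabs_right F) by lra. lra.
    + rewrite (Rabs_left h), (Rabs_left F) by lra. lra.
Qed.

Lemma hmid_weight_pos s z : (1 <= hmid_weight s z)%nat.
Proof. destruct s; simpl; [|lia]. destruct (Req_EM_T _ _); [destruct (Req_EM_T _ _)|]; lia. Qed.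

Lemma weighted_count_1 s l : weighted_count s l = 1%nat ->
  exists z, l = z :: nil /\ hmid_weight s z = 1%nat.
Proof.
  destruct l as [|z [|z' l]]; simpl; [discriminate| |].
  - intros H. exists z. split; [reflexivity|lia].
  - intros H. pose proof (hmid_weight_pos s z). pose proof (hmid_weight_pos s z'). lia.
Qed.

Lemma good_singleton P Q s z (C : Prop) :
  (forall z', is_light_point P Q s z' <-> C /\ z' = z) -> C -> hmid_weight s z = 1%nat ->
  good P Q s.
Proof.
  intros Hch HC Hw. exists (z :: nil). split; [constructor; [simpl; tauto|constructor]|].
  split; [|simpl; rewrite Hw; reflexivity].
  intros z'. rewrite Hch. simpl. split; [intros [<-|[]]; auto|intros [_ ->]; auto].
Qed.

Lemma good_two_candidates P Q s z1 z2 (C1 C2 : Prop) : z1 <> z2 ->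
  (forall z, is_light_point P Q s z <-> (C1 /\ z = z1) \/ (C2 /\ z = z2)) ->
  (good P Q s <->
   (C1 /\ ~ C2 /\ hmid_weight s z1 = 1%nat) \/ (C2 /\ ~ C1 /\ hmid_weight s z2 = 1%nat)).
Proof.
  intros Hne Hch. split.
  - intros [l [_ [Hl Hw]]]. destruct (weighted_count_1 s l Hw) as [z [-> Hz]].
    assert (Hz' : is_light_point P Q s z) by (apply Hl; left; reflexivity).
    apply Hch in Hz'. destruct Hz' as [[HC1 ->]|[HC2 ->]].
    + left. repeat split; auto. intros HC2.
      assert (In z2 (z1 :: nil)) as [|[]] by (apply Hl, Hch; auto). congruence.
    + right. repeat split; auto. intros HC1.
      assert (In z1 (z2 :: nil)) as [|[]] by (apply Hl, Hch; auto). congruence.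
  - intros [[HC1 [HC2 Hw]]|[HC2 [HC1 Hw]]]; eapply good_singleton; eauto;
      intros z; rewrite Hch; intuition congruence.
Qed.

Lemma hmid_weight_V m n z : hmid_weight (Vseg m n) z = 1%nat.
Proof. reflexivity. Qed.

Lemma hmid_weight_H m n x : hmid_weight (Hseg m n) (x, IZR n) = 1%nat <-> x <> IZR m + /2.
Proof.
  simpl. destruct (Req_EM_T x (IZR m + /2)) as [E|E].
  - destruct (Req_EM_T (IZR n) (IZR n)) as [_|]; [|congruence]. split; [discriminate|contradiction].
  - tauto.
Qed.

Ltac push_IZR := repeat first
  [ rewrite plus_IZR in * | rewrite minus_IZR in * | rewrite mult_IZR in * | rewrite opp_IZR in * ].

Lemma F_P_pair P x y : F_P P (x, y) = red2 (P * (y + P * x) + 1).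
Proof. unfold F_P. simpl. f_equal. ring. Qed.
Lemma F_Q_pair P Q x y : F_Q P Q (x, y) = red2 (P * (y + Q * x) + 1).
Proof. unfold F_Q. simpl. f_equal. ring. Qed.

Lemma light_Vseg P Q X Y z : Q = 2 - P ->
  let t := frac_part (P * IZR X) in let F := Int_part (P * IZR X) in
  is_light_point P Q (Vseg X Y) z <->
  (exists d : Z, z = (IZR X, IZR Y + IZR d - t) /\ 0 <= IZR d - t <= 1 /\
     between0 (red2 (2 * t)) (red2 (P * (IZR Y + IZR F + IZR d) + 1))) \/
  (exists d : Z, z = (IZR X, IZR Y + IZR d + t) /\ 0 <= IZR d + t <= 1 /\
     between0 (red2 (2 * t)) (red2 (P * (IZR Y + 2 * IZR X - IZR F + IZR d) + 1))).
Proof.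
  intros HQ t F. assert (Ht : t = P * IZR X - IZR F) by reflexivity.
  pose proof (base_fp (P * IZR X)) as Htb. fold t in Htb. clearbody t F.
  assert (HFV : forall y, F_V P (IZR X, y) = red2 (2 * t)).
  { intros y. apply (red2_shift _ _ F). simpl. lra. }
  unfold is_light_point. split.
  - intros [Hs [[[k Hk] H]|[[k Hk] H]]]; destruct z as [x y];
      destruct Hs as [Hx Hy]; simpl in Hx, Hy, Hk; subst x;
      cbn [F_A] in H; rewrite between0_iff, HFV in H; [left|right].
    + exists (k - Y - F)%Z. push_IZR. split; [f_equal; lra|]. split; [lra|].
      rewrite F_P_pair in H. replace (IZR Y + IZR F + _) with (y + P * IZR X) by lra. exact H.
    + exists (k - 2 * X + F - Y)%Z. push_IZR. rewrite HQ in Hk.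
      split; [f_equal; lra|]. split; [lra|].
      rewrite F_Q_pair, HQ in H. replace (IZR Y + 2 * IZR X - IZR F + _) with (y + (2 - P) * IZR X) by lra.
      exact H.
  - intros [[d [-> [Hd HL]]]|[d [-> [Hd HL]]]];
      (split; [simpl; split; [reflexivity|lra]|]); cbn [F_A];
      rewrite <- between0_iff, <- (HFV (IZR Y)) in HL; [left|right].
    + split; [exists (Y + F + d)%Z; cbn [fst snd]; push_IZR; lra|].
      rewrite HFV, F_P_pair, <- (HFV (IZR Y)). simpl.
      replace (_ + P * IZR X) with (IZR Y + IZR F + IZR d) by lra. exact HL.
    + split; [exists (Y + 2 * X - F + d)%Z; cbn [fst snd]; push_IZR; rewrite HQ; lra|].
      rewrite HFV, F_Q_pair, <- (HFV (IZR Y)), HQ. simpl.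
      replace (_ + (2 - P) * IZR X) with (IZR Y + 2 * IZR X - IZR F + IZR d) by lra. exact HL.
Qed.

Lemma light_Hseg P Q X Y z : 0 < P -> Q = 2 - P -> 0 < Q ->
  let t := frac_part (P * IZR X) in let F := Int_part (P * IZR X) in
  is_light_point P Q (Hseg X Y) z <->
  (exists d : Z, z = (IZR X + (IZR d - t) / P, IZR Y) /\ 0 <= (IZR d - t) / P <= 1 /\
     between0 (red2 (2 * P * IZR Y)) (red2 (P * (IZR Y + IZR F + IZR d) + 1))) \/
  (exists d : Z, z = (IZR X + (IZR d + t) / Q, IZR Y) /\ 0 <= (IZR d + t) / Q <= 1 /\
     between0 (red2 (2 * P * IZR Y)) (red2 (P * (IZR Y + 2 * IZR X - IZR F + IZR d) + 1))).
Proof.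
  intros HP HQ HQp t F. assert (Ht : t = P * IZR X - IZR F) by reflexivity. clearbody t F.
  unfold is_light_point. split.
  - intros [Hs [[[k Hk] H]|[[k Hk] H]]]; destruct z as [x y];
      destruct Hs as [Hx Hy]; simpl in Hx, Hy, Hk; subst y;
      cbn [F_A] in H; rewrite between0_iff in H; [left|right].
    + exists (k - Y - F)%Z. push_IZR.
      assert (Ex : (IZR k - IZR Y - IZR F - t) / P = x - IZR X)
        by (apply (Rmult_eq_reg_r P); [field_simplify; lra|lra]).
      rewrite Ex. split; [f_equal; lra|]. split; [lra|].
      rewrite F_P_pair in H. replace (IZR Y + IZR F + _) with (IZR Y + P * x) by lra. exact H.
    + exists (k - 2 * X + F - Y)%Z. push_IZR. rewrite HQ in *.
      assert (Ex : (IZR k - 2 * IZR X + IZR F - IZR Y + t) / (2 - P) = x - IZR X)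
        by (apply (Rmult_eq_reg_r (2 - P)); [field_simplify; lra|lra]).
      rewrite Ex. split; [f_equal; lra|]. split; [lra|].
      rewrite F_Q_pair in H. replace (IZR Y + 2 * IZR X - IZR F + _) with (IZR Y + (2 - P) * x) by lra.
      exact H.
  - intros [[d [-> [Hd HL]]]|[d [-> [Hd HL]]]];
      (split; [simpl; split; [lra|reflexivity]|]); cbn [F_A]; [left|right];
      rewrite between0_iff; subst t.
    + split; [exists (Y + F + d)%Z; cbn [fst snd]; push_IZR; field; lra|].
      rewrite F_P_pair. replace (IZR Y + P * _) with (IZR Y + IZR F + IZR d) by (field; lra). exact HL.
    + split; [exists (Y + 2 * X - F + d)%Z; cbn [fst snd]; push_IZR; rewrite HQ in *; field; lra|].
      rewrite F_Q_pair. replace (IZR Y + Q * _) with (IZR Y + 2 * IZR X - IZR F + IZR d)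
        by (rewrite HQ in *; field; lra). exact HL.
Qed.

Lemma between0_0 F : ~ between0 0 F.
Proof. unfold between0. lra. Qed.

Lemma Z_01 d : -1 < IZR d < 2 -> d = 0%Z \/ d = 1%Z.
Proof. intros [H1 H2]. apply lt_IZR in H1. apply lt_IZR in H2. lia. Qed.

Lemma Rdiv_unit_interval x y : 0 < y -> 0 <= x <= y -> 0 <= x / y <= 1.
Proof.
  intros Hy [H1 H2]. split.
  - apply Rmult_le_pos; [lra|left; apply Rinv_0_lt_compat; lra].
  - apply Rmult_le_reg_r with y; [lra|]. replace (x / y * y) with x by (field; lra). lra.
Qed.

Lemma Rdiv_neq x y c : 0 < y -> x <> c * y -> x / y <> c.
Proof. intros Hy H E. apply H. rewrite <- E. field. lra. Qed.

Lemma pair_neq_l (x1 x2 y : R) : x1 <> x2 -> (x1, y) <> (x2, y).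
Proof. intros H E. inversion E. contradiction. Qed.
Lemma pair_neq_r (x y1 y2 : R) : y1 <> y2 -> (x, y1) <> (x, y2).
Proof. intros H E. inversion E. contradiction. Qed.

Section VerticalSegment.
Variables (P Q : R) (X Y : Z).
Hypothesis HP : 0 < P < 1.
Hypothesis HQ : Q = 2 - P.
Let t := frac_part (P * IZR X).
Let F := Int_part (P * IZR X).
Let h := red2 (2 * t).
Let CP := between0 h (red2 (P * (IZR Y + IZR F + 1) + 1)).
Let CQ := between0 h (red2 (P * (IZR Y + 2 * IZR X - IZR F) + 1)).

(* A candidate at an endpoint of the segment needs [t = 0], where [F_V] vanishes. *)
Lemma light_Vseg_two z : is_light_point P Q (Vseg X Y) z <->
  (CP /\ z = (IZR X, IZR Y + 1 - t)) \/ (CQ /\ z = (IZR X, IZR Y + t)).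
Proof.
  pose proof (base_fp (P * IZR X)) as Ht. fold t in Ht.
  assert (Hdeg : t = 0 -> forall G, ~ between0 h G).
  { intros E G. unfold h. rewrite E, Rmult_0_r, red2_id by lra. apply between0_0. }
  rewrite (light_Vseg P Q X Y z HQ). fold t F. fold h. unfold CP, CQ. split.
  - intros [[d [-> [Hd HL]]]|[d [-> [Hd HL]]]];
      (destruct (Z_01 d) as [->| ->]; [lra| |]); simpl IZR in *.
    + exfalso. apply (Hdeg ltac:(lra) _ HL).
    + left. split; [exact HL|f_equal; ring].
    + right. split; [rewrite Rplus_0_r in HL; exact HL|f_equal; ring].
    + exfalso. apply (Hdeg ltac:(lra) _ HL).
  - intros [[HL ->]|[HL ->]]; [left; exists 1%Z|right; exists 0%Z]; simpl IZR.
    + split; [f_equal; ring|]. split; [lra|exact HL].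
    + split; [f_equal; ring|]. split; [lra|rewrite Rplus_0_r; exact HL].
Qed.

Lemma good_Vseg : 2 * t - 1 <> 0 -> (good P Q (Vseg X Y) <-> xor CP CQ).
Proof.
  intros Ht.
  assert (Hne : (IZR X, IZR Y + 1 - t) <> (IZR X, IZR Y + t)) by (apply pair_neq_r; lra).
  rewrite (good_two_candidates _ _ _ _ _ _ _ Hne light_Vseg_two).
  rewrite !hmid_weight_V. unfold xor. tauto.
Qed.

End VerticalSegment.

Section HorizontalSegment.
Variables (P Q : R) (X Y : Z).
Hypothesis HP : 0 < P < 1.
Hypothesis HQ : Q = 2 - P.
Let t := frac_part (P * IZR X).
Let F := Int_part (P * IZR X).
Let h := red2 (2 * P * IZR Y).
Let CP0 := between0 h (red2 (P * (IZR Y + IZR F) + 1)).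
Let CP1 := between0 h (red2 (P * (IZR Y + IZR F + 1) + 1)).
Let CQ0 := between0 h (red2 (P * (IZR Y + 2 * IZR X - IZR F) + 1)).
Let CQ1 := between0 h (red2 (P * (IZR Y + 2 * IZR X - IZR F + 1) + 1)).

Lemma light_Hseg_four z : is_light_point P Q (Hseg X Y) z <->
  (t = 0 /\ CP0 /\ z = (IZR X, IZR Y)) \/
  (1 - P <= t /\ CP1 /\ z = (IZR X + (1 - t) / P, IZR Y)) \/
  (CQ0 /\ z = (IZR X + t / Q, IZR Y)) \/
  (t <= 1 - P /\ CQ1 /\ z = (IZR X + (1 + t) / Q, IZR Y)).
Proof.
  pose proof (base_fp (P * IZR X)) as Ht. fold t in Ht.
  assert (HQp : 0 < Q) by lra.
  rewrite (light_Hseg P Q X Y z ltac:(lra) HQ HQp). fold t F h.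
  unfold CP0, CP1, CQ0, CQ1. split.
  - intros [[d [-> [Hd HL]]]|[d [-> [Hd HL]]]].
    + assert (Hd' : t <= IZR d <= t + P).
      { destruct Hd as [Hd1 Hd2].
        apply Rmult_le_compat_r with (r := P) in Hd1; [|lra].
        apply Rmult_le_compat_r with (r := P) in Hd2; [|lra].
        replace ((IZR d - t) / P * P) with (IZR d - t) in Hd1, Hd2 by (field; lra). lra. }
      destruct (Z_01 d) as [->| ->]; [lra| |]; simpl IZR in *.
      * left. split; [lra|]. split; [rewrite Rplus_0_r in HL; exact HL|].
        f_equal. replace t with 0 by lra. field. lra.
      * right; left. split; [lra|]. split; [exact HL|reflexivity].
    + assert (Hd' : - t <= IZR d <= Q - t).
      { destruct Hd as [Hd1 Hd2].
        apply Rmult_le_compat_r with (r := Q) in Hd1; [|lra].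
        apply Rmult_le_compat_r with (r := Q) in Hd2; [|lra].
        replace ((IZR d + t) / Q * Q) with (IZR d + t) in Hd1, Hd2 by (field; lra). lra. }
      destruct (Z_01 d) as [->| ->]; [lra| |]; simpl IZR in *.
      * right; right; left. split; [rewrite Rplus_0_r in HL; exact HL|].
        f_equal. f_equal. field. lra.
      * right; right; right. split; [lra|]. split; [exact HL|f_equal; f_equal; field; lra].
  - intros [[Ht0 [HL ->]]|[[Ht1 [HL ->]]|[[HL ->]|[Ht1 [HL ->]]]]].
    + left. exists 0%Z. simpl IZR. rewrite Ht0.
      split; [f_equal; field; lra|]. split; [unfold Rdiv; lra|].
      rewrite Rplus_0_r. exact HL.
    + left. exists 1%Z. simpl IZR. split; [reflexivity|].
      split; [apply Rdiv_unit_interval; lra|exact HL].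
    + right. exists 0%Z. simpl IZR. split; [f_equal; f_equal; field; lra|].
      split; [apply Rdiv_unit_interval; lra|rewrite Rplus_0_r; exact HL].
    + right. exists 1%Z. simpl IZR. split; [reflexivity|].
      split; [apply Rdiv_unit_interval; lra|exact HL].
Qed.

Lemma good_Hseg_zero : t = 0 -> (good P Q (Hseg X Y) <-> xor (CP0 \/ CQ0) CQ1).
Proof.
  intros Ht. assert (HQp : 0 < Q) by lra.
  assert (Hch : forall z, is_light_point P Q (Hseg X Y) z <->
     ((CP0 \/ CQ0) /\ z = (IZR X, IZR Y)) \/ (CQ1 /\ z = (IZR X + 1 / Q, IZR Y))).
  { intros z. rewrite light_Hseg_four.
    replace (IZR X + t / Q) with (IZR X) by (rewrite Ht; field; lra).
    replace (IZR X + (1 + t) / Q) with (IZR X + 1 / Q) by (rewrite Ht; field; lra).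
    intuition lra. }
  assert (H1Q : 1 / Q <> /2) by (apply Rdiv_neq; lra).
  assert (0 < 1 / Q) by (apply Rdiv_lt_0_compat; lra).
  assert (Hne : (IZR X, IZR Y) <> (IZR X + 1 / Q, IZR Y)) by (apply pair_neq_l; lra).
  rewrite (good_two_candidates _ _ _ _ _ _ _ Hne Hch), !hmid_weight_H.
  assert (IZR X <> IZR X + /2) by lra. assert (IZR X + 1 / Q <> IZR X + /2) by lra.
  unfold xor. tauto.
Qed.

Lemma good_Hseg_below : 0 < t < 1 - P -> (good P Q (Hseg X Y) <-> xor CQ0 CQ1).
Proof.
  intros Ht. assert (HQp : 0 < Q) by lra.
  assert (Hch : forall z, is_light_point P Q (Hseg X Y) z <->
     (CQ0 /\ z = (IZR X + t / Q, IZR Y)) \/ (CQ1 /\ z = (IZR X + (1 + t) / Q, IZR Y))).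
  { intros z. rewrite light_Hseg_four. intuition lra. }
  assert (Hne : (IZR X + t / Q, IZR Y) <> (IZR X + (1 + t) / Q, IZR Y)).
  { apply pair_neq_l. intros E. apply (Rdiv_neq (1 + t) Q (t / Q)); [lra| |].
    - replace (t / Q * Q) with t by (field; lra). lra.
    - lra. }
  rewrite (good_two_candidates _ _ _ _ _ _ _ Hne Hch), !hmid_weight_H.
  assert (t / Q <> /2) by (apply Rdiv_neq; lra).
  assert ((1 + t) / Q <> /2) by (apply Rdiv_neq; lra).
  assert (IZR X + t / Q <> IZR X + /2) by lra.
  assert (IZR X + (1 + t) / Q <> IZR X + /2) by lra.
  unfold xor. tauto.
Qed.

Lemma good_Hseg_at : t = 1 - P -> (good P Q (Hseg X Y) <-> xor CQ0 (CP1 \/ CQ1)).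
Proof.
  intros Ht. assert (HQp : 0 < Q) by lra.
  assert (Hch : forall z, is_light_point P Q (Hseg X Y) z <->
     (CQ0 /\ z = (IZR X + t / Q, IZR Y)) \/ ((CP1 \/ CQ1) /\ z = (IZR X + 1, IZR Y))).
  { intros z. rewrite light_Hseg_four.
    replace (IZR X + (1 - t) / P) with (IZR X + 1) by (rewrite Ht; field; lra).
    replace (IZR X + (1 + t) / Q) with (IZR X + 1) by (rewrite Ht, HQ; field; lra).
    intuition lra. }
  assert (t / Q <> 1) by (apply Rdiv_neq; lra).
  assert (Hne : (IZR X + t / Q, IZR Y) <> (IZR X + 1, IZR Y)) by (apply pair_neq_l; lra).
  rewrite (good_two_candidates _ _ _ _ _ _ _ Hne Hch), !hmid_weight_H.
  assert (t / Q <> /2) by (apply Rdiv_neq; lra).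
  assert (IZR X + t / Q <> IZR X + /2) by lra. assert (IZR X + 1 <> IZR X + /2) by lra.
  unfold xor. tauto.
Qed.

Lemma good_Hseg_above : 1 - P < t -> 2 * t + P - 2 <> 0 -> (good P Q (Hseg X Y) <-> xor CQ0 CP1).
Proof.
  intros Ht Ht2. pose proof (base_fp (P * IZR X)) as Htb. fold t in Htb. assert (HQp : 0 < Q) by lra.
  assert (Hch : forall z, is_light_point P Q (Hseg X Y) z <->
     (CQ0 /\ z = (IZR X + t / Q, IZR Y)) \/ (CP1 /\ z = (IZR X + (1 - t) / P, IZR Y))).
  { intros z. rewrite light_Hseg_four. intuition lra. }
  assert (Hne : (IZR X + t / Q, IZR Y) <> (IZR X + (1 - t) / P, IZR Y)).
  { apply pair_neq_l. intros E. apply (Rdiv_neq t Q ((1 - t) / P)); [lra| |lra].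
    intros E'. apply Ht2. rewrite HQ in E'.
    assert (t * P = (1 - t) * (2 - P)) by (rewrite E' at 1; field; lra). lra. }
  rewrite (good_two_candidates _ _ _ _ _ _ _ Hne Hch), !hmid_weight_H.
  assert (t / Q <> /2) by (apply Rdiv_neq; lra).
  assert ((1 - t) / P <> /2) by (apply Rdiv_neq; lra).
  assert (IZR X + t / Q <> IZR X + /2) by lra.
  assert (IZR X + (1 - t) / P <> IZR X + /2) by lra.
  unfold xor. tauto.
Qed.

(* Both remaining candidates sit at the midpoint, which counts twice. *)
Lemma not_good_Hseg_mid : 2 * t + P - 2 = 0 -> ~ good P Q (Hseg X Y).
Proof.
  intros Ht. pose proof (base_fp (P * IZR X)) as Htb. fold t in Htb. assert (HQp : 0 < Q) by lra.
  assert (Hch : forall z, is_light_point P Q (Hseg X Y) z <->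
     ((CQ0 \/ CP1) /\ z = (IZR X + /2, IZR Y)) \/ (False /\ z = (IZR X, IZR Y))).
  { intros z. rewrite light_Hseg_four.
    replace (IZR X + t / Q) with (IZR X + /2) by (rewrite HQ; replace t with (1 - P / 2) by lra; field; lra).
    replace (IZR X + (1 - t) / P) with (IZR X + /2) by (replace t with (1 - P / 2) by lra; field; lra).
    intuition lra. }
  assert (Hne : (IZR X + /2, IZR Y) <> (IZR X, IZR Y)) by (apply pair_neq_l; lra).
  rewrite (good_two_candidates _ _ _ _ _ _ _ Hne Hch), !hmid_weight_H. tauto.
Qed.

End HorizontalSegment.

(* With [a = frac (P m)] and [F0 = floor (P m)], [Xi_P] of the centre of the
   square [m, m+1] x [n, n+1] is [(2 a + P - 1, U1, U2)] modulo [Lambda_P]. *)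
Definition center_U1 (P : R) (m n : Z) : R :=
  red2 (2 * frac_part (P * IZR m) - P * IZR (Int_part (P * IZR m)) - P * IZR n).
Definition center_U2 (P : R) (m n : Z) : R :=
  red2 (2 * frac_part (P * IZR m) + P + P * IZR n - P * IZR (Int_part (P * IZR m))).

Section Square.
Variables (P Q : R) (m n : Z).
Hypothesis HP : 0 < P < 1.
Hypothesis HQ : Q = 2 - P.
Let a := frac_part (P * IZR m).
Let F0 := Int_part (P * IZR m).
Let U1 := center_U1 P m n.
Let U2 := center_U2 P m n.

Lemma Xi_center : exists i j k : Z,
  Xi P (center m n) = (2 * a + P - 1 + 2 * IZR i, U1 + P * IZR i + 2 * IZR j, U2 + P * IZR i + 2 * IZR k).
Proof.
  destruct (red2_mod2 (2 * a - P * IZR F0 - P * IZR n)) as [k1 Hk1].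
  destruct (red2_mod2 (2 * a + P + P * IZR n - P * IZR F0)) as [k2 Hk2].
  exists (F0 + n + 1)%Z, (F0 - k1)%Z, (F0 - k2)%Z.
  unfold Xi, center, U1, U2, center_U1, center_U2. fold a F0. rewrite Hk1, Hk2.
  cbn [fst snd]. push_IZR. unfold a, frac_part. fold F0. simpl IZR.
  f_equal; [f_equal|]; field.
Qed.

Lemma red2_P_line (Y : Z) (j : R) :
  red2 (P * (IZR Y + IZR F0 + j) + 1) = red2 (2 * a - U1 + P * (IZR Y - IZR n + j) + 1).
Proof.
  destruct (red2_mod2 (2 * a - P * IZR F0 - P * IZR n)) as [k Hk].
  apply (red2_shift _ _ k). unfold U1, center_U1. fold a F0. rewrite Hk. ring.
Qed.

Lemma red2_Q_line (Y : Z) (j : R) :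
  red2 (P * (IZR Y + 2 * IZR m - IZR F0 + j) + 1) = red2 (U2 + P * (IZR Y - IZR n + j - 1) + 1).
Proof.
  destruct (red2_mod2 (2 * a + P + P * IZR n - P * IZR F0)) as [k Hk].
  apply (red2_shift _ _ (F0 - k)). unfold U2, center_U2. fold a F0. rewrite Hk.
  unfold a, frac_part. fold F0. push_IZR. ring.
Qed.

Lemma red2_H_line (Y : Z) :
  red2 (2 * P * IZR Y) = red2 (U2 - U1 - P + 2 * (P * (IZR Y - IZR n))).
Proof.
  destruct (red2_mod2 (2 * a - P * IZR F0 - P * IZR n)) as [k1 Hk1].
  destruct (red2_mod2 (2 * a + P + P * IZR n - P * IZR F0)) as [k2 Hk2].
  apply (red2_shift _ _ (k1 - k2)). unfold U1, U2, center_U1, center_U2. fold a F0.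
  rewrite Hk1, Hk2. push_IZR. ring.
Qed.

Lemma good_W_iff : 2 * a - 1 <> 0 ->
  (good P Q (Vseg m n) <->
   xor (between0 (red2 (2 * a)) (red2 (2 * a - U1 + P + 1)))
       (between0 (red2 (2 * a)) (red2 (U2 - P + 1)))).
Proof.
  intros Ha. rewrite (good_Vseg P Q m n HP HQ Ha). fold a F0.
  rewrite red2_P_line, <- (Rplus_0_r (_ - IZR F0)), red2_Q_line.
  replace (P * (IZR n - IZR n + 1)) with P by ring.
  replace (P * (IZR n - IZR n + 0 - 1)) with (- P) by ring.
  reflexivity.
Qed.

Lemma frac_part_next_lo : a + P < 1 ->
  Int_part (P * IZR (m + 1)) = F0 /\ frac_part (P * IZR (m + 1)) = a + P.
Proof.
  intros H. pose proof (base_fp (P * IZR m)) as Hb. fold a in Hb.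
  assert (Ha' : a = P * IZR m - IZR F0) by reflexivity.
  assert (E : Int_part (P * IZR (m + 1)) = F0).
  { apply Int_part_unique. rewrite plus_IZR. simpl. nra. }
  split; [exact E|]. unfold frac_part. rewrite E, Ha', plus_IZR. simpl. ring.
Qed.

Lemma frac_part_next_hi : 1 <= a + P ->
  Int_part (P * IZR (m + 1)) = (F0 + 1)%Z /\ frac_part (P * IZR (m + 1)) = a + P - 1.
Proof.
  intros H. pose proof (base_fp (P * IZR m)) as Hb. fold a in Hb.
  assert (Ha' : a = P * IZR m - IZR F0) by reflexivity.
  assert (E : Int_part (P * IZR (m + 1)) = (F0 + 1)%Z).
  { apply Int_part_unique. rewrite !plus_IZR. simpl. nra. }
  split; [exact E|]. unfold frac_part. rewrite E, Ha', !plus_IZR. simpl. ring.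
Qed.

Lemma good_E_lo_iff : a + P < 1 -> 2 * a + 2 * P - 1 <> 0 ->
  (good P Q (Vseg (m + 1) n) <->
   xor (between0 (red2 (2 * a + 2 * P)) (red2 (2 * a - U1 + P + 1)))
       (between0 (red2 (2 * a + 2 * P)) (red2 (U2 + P + 1)))).
Proof.
  intros H Ha. destruct (frac_part_next_lo H) as [EF Et].
  rewrite (good_Vseg P Q (m + 1) n HP HQ) by (rewrite Et; lra). rewrite EF, Et.
  replace (IZR n + 2 * IZR (m + 1) - IZR F0) with (IZR n + 2 * IZR m - IZR F0 + 2)
    by (rewrite plus_IZR; simpl; ring).
  rewrite red2_P_line, red2_Q_line.
  replace (P * (IZR n - IZR n + 1)) with P by ring.
  replace (P * (IZR n - IZR n + 2 - 1)) with P by ring.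
  replace (2 * (a + P)) with (2 * a + 2 * P) by ring.
  reflexivity.
Qed.

Lemma good_E_hi_iff : 1 <= a + P -> 2 * a + 2 * P - 3 <> 0 ->
  (good P Q (Vseg (m + 1) n) <->
   xor (between0 (red2 (2 * a + 2 * P)) (red2 (2 * a - U1 + 2 * P + 1)))
       (between0 (red2 (2 * a + 2 * P)) (red2 (U2 + 1)))).
Proof.
  intros H Ha. destruct (frac_part_next_hi H) as [EF Et].
  rewrite (good_Vseg P Q (m + 1) n HP HQ) by (rewrite Et; lra). rewrite EF, Et.
  replace (IZR n + IZR (F0 + 1) + 1) with (IZR n + IZR F0 + 2) by (rewrite plus_IZR; simpl; ring).
  replace (IZR n + 2 * IZR (m + 1) - IZR (F0 + 1)) with (IZR n + 2 * IZR m - IZR F0 + 1)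
    by (rewrite !plus_IZR; simpl; ring).
  rewrite red2_P_line, red2_Q_line.
  replace (P * (IZR n - IZR n + 2)) with (2 * P) by ring.
  replace (P * (IZR n - IZR n + 1 - 1)) with 0 by ring.
  rewrite Rplus_0_r. replace (2 * (a + P - 1)) with (2 * a + 2 * P + 2 * IZR (-1)) by (simpl; ring).
  rewrite (red2_shift (2 * a + 2 * P + 2 * IZR (-1)) (2 * a + 2 * P) (-1)) by reflexivity.
  reflexivity.
Qed.

Lemma row_values (e : Z) :
  let c := P * IZR e in
  red2 (2 * P * IZR (n + e)) = red2 (U2 - U1 - P + 2 * c) /\
  red2 (P * (IZR (n + e) + IZR F0) + 1) = red2 (2 * a - U1 + c + 1) /\
  red2 (P * (IZR (n + e) + IZR F0 + 1) + 1) = red2 (2 * a - U1 + c + P + 1) /\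
  red2 (P * (IZR (n + e) + 2 * IZR m - IZR F0) + 1) = red2 (U2 - P + c + 1) /\
  red2 (P * (IZR (n + e) + 2 * IZR m - IZR F0 + 1) + 1) = red2 (U2 + c + 1).
Proof.
  intros c. unfold c. repeat split.
  - rewrite red2_H_line, plus_IZR. f_equal. ring.
  - rewrite <- (Rplus_0_r (_ + IZR F0)), red2_P_line, plus_IZR. f_equal. ring.
  - rewrite red2_P_line, plus_IZR. f_equal. ring.
  - rewrite <- (Rplus_0_r (_ - IZR F0)), red2_Q_line, plus_IZR. f_equal. ring.
  - rewrite red2_Q_line, plus_IZR. f_equal. ring.
Qed.

End Square.

Definition open_band (u : R * R * R) (k : nat) (x : R) : Prop :=
  let '(c1, c2, c3) := u in
  match k with
  | 1%nat => -1 < x < c1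
  | 2%nat => c1 < x < c2
  | 3%nat => c2 < x < c3
  | 4%nat => c3 < x < 1
  | _ => False
  end.

Definition in_open_cell (P : R) (r : regime) (A B : nat) (v : R * R * R) : Prop :=
  let '(T, U1, U2) := v in
  exists i j k : Z,
    let T' := T - 2 * IZR i in
    let U1' := U1 - P * IZR i - 2 * IZR j in
    let U2' := U2 - P * IZR i - 2 * IZR k in
    regime_applies P r T' /\ open_band (cuts P r T') A U1' /\ open_band (cuts P r T') B U2'.

Lemma open_band_bounds P r T A x : 0 < P < 1 -> regime_applies P r T ->
  open_band (cuts P r T) A x -> -1 < x < 1.
Proof. intros HP Hr HA. destruct r; destruct A as [|[|[|[|[|A]]]]]; simpl in *; lra. Qed.

Lemma Z_m10 d : -2 < IZR d < 1 -> d = (-1)%Z \/ d = 0%Z.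
Proof. intros [H1 H2]. apply lt_IZR in H1. apply lt_IZR in H2. lia. Qed.

Lemma in_open_cell_cases P a u1 u2 r A B :
  0 < P < 1 -> 0 <= a < 1 -> -1 < u1 < 1 -> -1 < u2 < 1 ->
  in_open_cell P r A B (2 * a + P - 1, u1, u2) ->
  exists T U1 U2,
    ((T = 2 * a + P - 1 /\ U1 = u1 /\ U2 = u2) \/
     (T = 2 * a + P - 3 /\ (U1 = u1 - P \/ U1 = u1 - P + 2) /\ (U2 = u2 - P \/ U2 = u2 - P + 2))) /\
    regime_applies P r T /\ open_band (cuts P r T) A U1 /\ open_band (cuts P r T) B U2.
Proof.
  intros HP Ha Hu1 Hu2 [i [j [k [Hr [HA HB]]]]].
  pose proof (open_band_bounds _ _ _ _ _ HP Hr HA) as HU1.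
  pose proof (open_band_bounds _ _ _ _ _ HP Hr HB) as HU2.
  assert (HT : -1 <= 2 * a + P - 1 - 2 * IZR i <= 1) by (destruct r; simpl in Hr; lra).
  eexists _, _, _. split; [|split; [exact Hr|split; [exact HA|exact HB]]].
  destruct (Z_01 i) as [-> | ->]; [lra| |]; simpl IZR in *.
  - left. assert (j = 0%Z) as -> by (apply IZR_small; lra).
    assert (k = 0%Z) as -> by (apply IZR_small; lra). simpl IZR. repeat split; ring.
  - right. split; [ring|].
    destruct (Z_m10 j) as [-> | ->]; [lra| |]; (destruct (Z_m10 k) as [-> | ->]; [lra| |]);
      simpl IZR; split; first [left; ring | right; ring].
Qed.

Definition rect_labelb (r : regime) (a b : nat) (e : edge) : bool :=
  (Nat.eqb (fst (spec_pos r e)) a || Nat.eqb (snd (spec_pos r e)) b) &&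
  negb (existsb (fun e' => Nat.eqb (fst (spec_pos r e')) a && Nat.eqb (snd (spec_pos r e')) b)
          (eN :: eS :: eE :: eW :: nil)).

Lemma rect_labelP r a b e : rect_label r a b e <-> rect_labelb r a b e = true.
Proof.
  unfold rect_label, rect_labelb.
  rewrite andb_true_iff, orb_true_iff, !Nat.eqb_eq, negb_true_iff.
  apply and_iff_compat_l. split.
  - intros H. destruct (existsb _ _) eqn:E; [|reflexivity]. exfalso. apply H.
    apply existsb_exists in E. destruct E as [e' [_ He']].
    rewrite andb_true_iff, !Nat.eqb_eq in He'. exists e'.
    destruct (spec_pos r e'). simpl in *. destruct He'. subst. reflexivity.
  - intros H [e' He']. rewrite <- not_true_iff_false in H. apply H.
    apply existsb_exists. exists e'. split; [destruct e'; simpl; tauto|].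
    rewrite He'. simpl. rewrite !Nat.eqb_refl. reflexivity.
Qed.

Lemma iff_true_r (X : Prop) : X -> (X <-> true = true).
Proof. tauto. Qed.
Lemma iff_false_r (X : Prop) : ~ X -> (X <-> false = true).
Proof. intros H. split; [contradiction|discriminate]. Qed.

Ltac decide_rect_label := rewrite rect_labelP;
  match goal with |- _ <-> ?x = true => let v := eval vm_compute in x in change x with v end;
  first [apply iff_true_r | apply iff_false_r].

Ltac reduced_cases H := let Hb := fresh in let H1 := fresh in destruct H as [Hb H1];
  repeat (destruct H1 as [H1|H1]; [try (exfalso; lra)|]); try (exfalso; lra).

Ltac band_cases A H := destruct A as [|[|[|[|[|?]]]]]; simpl in H; try contradiction; try (exfalso; lra).

(* Hides disequalities from [lra] during the case split, where they would only
   multiply the work; they are needed only to close the final goals. *)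
Definition hidden_neq (x y : R) : Prop := x <> y.

Ltac solve_cell_label :=
  intros;
  let T := fresh "T" in let U1 := fresh "U1" in let U2 := fresh "U2" in
  let Hrep := fresh "Hrep" in let Hr := fresh "Hr" in let HA := fresh "HA" in let HB := fresh "HB" in
  repeat match goal with H : ?x <> ?y |- _ => change (hidden_neq x y) in H end;
  match goal with Hcell : in_open_cell _ _ _ _ _ |- _ =>
    apply in_open_cell_cases in Hcell; [|assumption..];
    destruct Hcell as [T [U1 [U2 [Hrep [Hr [HA HB]]]]]] end;
  destruct Hrep as [[-> [-> ->]]|[-> [[-> | ->] [-> | ->]]]];
  match goal with |- _ <-> rect_label ?r ?A ?B _ =>
    destruct r; simpl in Hr; try (exfalso; lra); band_cases A HA; band_cases B HB
  end;
  decide_rect_label; unfold xor, between0;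
  repeat match reverse goal with H : reduces_to _ _ |- _ => reduced_cases H end;
  unfold hidden_neq in *; lra.

Section CellLabels.
Variables (P a u1 u2 : R) (r : regime) (A B : nat).
Hypotheses (HP : 0 < P < 1) (Ha : 0 <= a < 1) (Hu1 : -1 < u1 < 1) (Hu2 : -1 < u2 < 1).
Hypothesis Hcell : in_open_cell P r A B (2 * a + P - 1, u1, u2).

Lemma cell_label_W (h FP FQ : R) :
  reduces_to (2 * a) h -> reduces_to (2 * a - u1 + P + 1) FP -> reduces_to (u2 - P + 1) FQ ->
  FP <> 0 -> FP <> h -> FQ <> 0 -> FQ <> h ->
  (xor (between0 h FP) (between0 h FQ) <-> rect_label r A B eW).
Proof. solve_cell_label. Qed.

Lemma cell_label_E_lo (h FP FQ : R) : a + P < 1 ->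
  reduces_to (2 * a + 2 * P) h -> reduces_to (2 * a - u1 + P + 1) FP -> reduces_to (u2 + P + 1) FQ ->
  FP <> 0 -> FP <> h -> FQ <> 0 -> FQ <> h ->
  (xor (between0 h FP) (between0 h FQ) <-> rect_label r A B eE).
Proof. solve_cell_label. Qed.

Lemma cell_label_E_hi (h FP FQ : R) : 1 <= a + P ->
  reduces_to (2 * a + 2 * P) h -> reduces_to (2 * a - u1 + 2 * P + 1) FP -> reduces_to (u2 + 1) FQ ->
  FP <> 0 -> FP <> h -> FQ <> 0 -> FQ <> h ->
  (xor (between0 h FP) (between0 h FQ) <-> rect_label r A B eE).
Proof. solve_cell_label. Qed.

Lemma cell_label_S_zero (h FP0 FQ0 FQ1 : R) : a = 0 ->
  reduces_to (u2 - u1 - P) h -> reduces_to (2 * a - u1 + 1) FP0 ->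
  reduces_to (u2 - P + 1) FQ0 -> reduces_to (u2 + 1) FQ1 ->
  FP0 <> 0 -> FP0 <> h -> FQ0 <> 0 -> FQ0 <> h -> FQ1 <> 0 -> FQ1 <> h ->
  (xor (between0 h FP0 \/ between0 h FQ0) (between0 h FQ1) <-> rect_label r A B eS).
Proof. solve_cell_label. Qed.

Lemma cell_label_S_below (h FQ0 FQ1 : R) : 0 < a < 1 - P ->
  reduces_to (u2 - u1 - P) h -> reduces_to (u2 - P + 1) FQ0 -> reduces_to (u2 + 1) FQ1 ->
  FQ0 <> 0 -> FQ0 <> h -> FQ1 <> 0 -> FQ1 <> h ->
  (xor (between0 h FQ0) (between0 h FQ1) <-> rect_label r A B eS).
Proof. solve_cell_label. Qed.

Lemma cell_label_S_at (h FP1 FQ0 FQ1 : R) : a = 1 - P ->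
  reduces_to (u2 - u1 - P) h -> reduces_to (2 * a - u1 + P + 1) FP1 ->
  reduces_to (u2 - P + 1) FQ0 -> reduces_to (u2 + 1) FQ1 ->
  FP1 <> 0 -> FP1 <> h -> FQ0 <> 0 -> FQ0 <> h -> FQ1 <> 0 -> FQ1 <> h ->
  (xor (between0 h FQ0) (between0 h FP1 \/ between0 h FQ1) <-> rect_label r A B eS).
Proof. solve_cell_label. Qed.

Lemma cell_label_S_above (h FP1 FQ0 : R) : 1 - P < a -> 2 * a + P - 2 <> 0 ->
  reduces_to (u2 - u1 - P) h -> reduces_to (2 * a - u1 + P + 1) FP1 -> reduces_to (u2 - P + 1) FQ0 ->
  FP1 <> 0 -> FP1 <> h -> FQ0 <> 0 -> FQ0 <> h ->
  (xor (between0 h FQ0) (between0 h FP1) <-> rect_label r A B eS).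
Proof. solve_cell_label. Qed.

Lemma cell_label_S_mid (h : R) : 2 * a + P - 2 = 0 -> reduces_to (u2 - u1 - P) h -> ~ rect_label r A B eS.
Proof. intros Hm Hh. cut (False <-> rect_label r A B eS); [tauto|solve_cell_label]. Qed.

Lemma cell_label_N_zero (h FP0 FQ0 FQ1 : R) : a = 0 ->
  reduces_to (u2 - u1 + P) h -> reduces_to (2 * a - u1 + P + 1) FP0 ->
  reduces_to (u2 + 1) FQ0 -> reduces_to (u2 + P + 1) FQ1 ->
  FP0 <> 0 -> FP0 <> h -> FQ0 <> 0 -> FQ0 <> h -> FQ1 <> 0 -> FQ1 <> h ->
  (xor (between0 h FP0 \/ between0 h FQ0) (between0 h FQ1) <-> rect_label r A B eN).
Proof. solve_cell_label. Qed.

Lemma cell_label_N_below (h FQ0 FQ1 : R) : 0 < a < 1 - P ->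
  reduces_to (u2 - u1 + P) h -> reduces_to (u2 + 1) FQ0 -> reduces_to (u2 + P + 1) FQ1 ->
  FQ0 <> 0 -> FQ0 <> h -> FQ1 <> 0 -> FQ1 <> h ->
  (xor (between0 h FQ0) (between0 h FQ1) <-> rect_label r A B eN).
Proof. solve_cell_label. Qed.

Lemma cell_label_N_at (h FP1 FQ0 FQ1 : R) : a = 1 - P ->
  reduces_to (u2 - u1 + P) h -> reduces_to (2 * a - u1 + 2 * P + 1) FP1 ->
  reduces_to (u2 + 1) FQ0 -> reduces_to (u2 + P + 1) FQ1 ->
  FP1 <> 0 -> FP1 <> h -> FQ0 <> 0 -> FQ0 <> h -> FQ1 <> 0 -> FQ1 <> h ->
  (xor (between0 h FQ0) (between0 h FP1 \/ between0 h FQ1) <-> rect_label r A B eN).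
Proof. solve_cell_label. Qed.

Lemma cell_label_N_above (h FP1 FQ0 : R) : 1 - P < a -> 2 * a + P - 2 <> 0 ->
  reduces_to (u2 - u1 + P) h -> reduces_to (2 * a - u1 + 2 * P + 1) FP1 -> reduces_to (u2 + 1) FQ0 ->
  FP1 <> 0 -> FP1 <> h -> FQ0 <> 0 -> FQ0 <> h ->
  (xor (between0 h FQ0) (between0 h FP1) <-> rect_label r A B eN).
Proof. solve_cell_label. Qed.

Lemma cell_label_N_mid (h : R) : 2 * a + P - 2 = 0 -> reduces_to (u2 - u1 + P) h -> ~ rect_label r A B eN.
Proof. intros Hm Hh. cut (False <-> rect_label r A B eN); [tauto|solve_cell_label]. Qed.

End CellLabels.

Section Parity.
Variable W : Z.
Hypothesis W_odd : exists M, W = (2 * M + 1)%Z.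
Hypothesis W_pos : (0 < W)%Z.

Definition int_num x := exists N : Z, x * IZR W = IZR N.
Definition even_num x := exists N : Z, x * IZR W = 2 * IZR N.
Definition odd_num x := exists N : Z, x * IZR W = 2 * IZR N + 1.

Lemma even_num_add x y : even_num x -> even_num y -> even_num (x + y).
Proof. intros [a Ha] [b Hb]. exists (a+b)%Z. rewrite plus_IZR. nra. Qed.
Lemma even_num_opp x : even_num x -> even_num (- x).
Proof. intros [a Ha]. exists (-a)%Z. rewrite opp_IZR. nra. Qed.
Lemma odd_num_add_even x y : odd_num x -> even_num y -> odd_num (x + y).
Proof. intros [a Ha] [b Hb]. exists (a+b)%Z. rewrite plus_IZR. nra. Qed.
Lemma odd_num_even_add x y : even_num x -> odd_num y -> odd_num (x + y).
Proof. intros [a Ha] [b Hb]. exists (a+b)%Z. rewrite plus_IZR. nra. Qed.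
Lemma even_num_add_odd x y : odd_num x -> odd_num y -> even_num (x + y).
Proof. intros [a Ha] [b Hb]. exists (a+b+1)%Z. rewrite !plus_IZR. simpl. nra. Qed.
Lemma odd_num_opp x : odd_num x -> odd_num (- x).
Proof. intros [a Ha]. exists (-a-1)%Z. rewrite minus_IZR, opp_IZR. simpl. nra. Qed.
Lemma even_num_mulZ x k : even_num x -> even_num (x * IZR k).
Proof. intros [a Ha]. exists (a*k)%Z. rewrite mult_IZR. nra. Qed.
Lemma even_num_Zmul x k : even_num x -> even_num (IZR k * x).
Proof. intros [a Ha]. exists (a*k)%Z. rewrite mult_IZR. nra. Qed.
Lemma even_num_double x : int_num x -> even_num (2 * x).
Proof. intros [a Ha]. exists a. nra. Qed.
Lemma even_num_twoZ k : even_num (2 * IZR k).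
Proof. exists (k * W)%Z. rewrite mult_IZR. ring. Qed.
Lemma odd_num_1 : odd_num 1.
Proof. destruct W_odd as [M HM]. exists M. rewrite HM, plus_IZR, mult_IZR. simpl. ring. Qed.

Lemma int_num_even x : even_num x -> int_num x.
Proof. intros [a Ha]. exists (2*a)%Z. rewrite mult_IZR. simpl. lra. Qed.
Lemma int_num_odd x : odd_num x -> int_num x.
Proof. intros [a Ha]. exists (2*a+1)%Z. rewrite plus_IZR, mult_IZR. simpl. lra. Qed.

Lemma even_num_red2 x : even_num x -> even_num (red2 x).
Proof.
  intros H. destruct (red2_mod2 x) as [k ->]. apply even_num_add; [exact H|apply even_num_twoZ].
Qed.
Lemma odd_num_red2 x : odd_num x -> odd_num (red2 x).
Proof.
  intros H. destruct (red2_mod2 x) as [k ->]. apply odd_num_add_even; [exact H|apply even_num_twoZ].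
Qed.

Lemma inv_W_pos : 0 < / IZR W.
Proof. apply Rinv_0_lt_compat, IZR_lt, W_pos. Qed.

Lemma int_num_gap x : int_num x -> x = 0 \/ x >= / IZR W \/ x <= - / IZR W.
Proof.
  intros [N HN]. pose proof inv_W_pos.
  assert (Hw : 0 < IZR W) by (apply IZR_lt; exact W_pos).
  assert (Ex : x = IZR N * / IZR W) by (rewrite <- HN; field; lra).
  destruct (Z.lt_trichotomy N 0) as [Hn|[->|Hn]].
  - right; right. assert (IZR N <= -1) by (apply IZR_le; lia). rewrite Ex. nra.
  - left. rewrite Ex. ring.
  - right; left. assert (IZR N >= 1) by (apply Rle_ge, IZR_le; lia). rewrite Ex. nra.
Qed.

Lemma odd_num_gap x : odd_num x -> x >= / IZR W \/ x <= - / IZR W.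
Proof.
  intros H. destruct (int_num_gap x (int_num_odd x H)) as [->|E]; [|exact E].
  destruct H as [N HN]. exfalso.
  assert (2 * N + 1 = 0)%Z by (apply eq_IZR; rewrite plus_IZR, mult_IZR; simpl; lra). lia.
Qed.

Lemma odd_num_neq0 x : odd_num x -> x <> 0.
Proof. intros H. pose proof inv_W_pos. destruct (odd_num_gap x H); lra. Qed.

Lemma odd_num_neq x y : odd_num (x - y) -> x <> y.
Proof. intros H E. apply (odd_num_neq0 _ H). rewrite E. ring. Qed.

End Parity.

(* Subtractions need no rules of their own: [x - y] unfolds to [x + - y]. *)
Ltac parity W := solve [ assumption | apply (odd_num_1 W); assumption | apply (even_num_twoZ W)
  | apply (even_num_double W); parity W
  | apply (even_num_red2 W); parity W | apply (odd_num_red2 W); parity W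
  | apply (even_num_mulZ W); parity W | apply (even_num_Zmul W); parity W
  | apply (even_num_opp W); parity W | apply (odd_num_opp W); parity W
  | apply (even_num_add W); [parity W | parity W]
  | apply (odd_num_even_add W); [parity W | parity W]
  | apply (odd_num_add_even W); [parity W | parity W]
  | apply (even_num_add_odd W); [parity W | parity W] ].

Definition zero_or_far (eps x : R) : Prop := x = 0 \/ x >= eps \/ x <= - eps.
Definition far_from_zero (eps x : R) : Prop := x >= eps \/ x <= - eps.

Ltac far_cases H := destruct H as [H|[H|H]]; try (exfalso; lra).
Ltac far_cases1 H := destruct H as [H|H]; try (exfalso; lra).

Lemma regime_applies_perturb P r T d eps : 0 < eps -> -eps/2 < d < eps/2 ->
  zero_or_far eps (T - (-1 + P)) -> zero_or_far eps (T - (1 - P)) ->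
  zero_or_far eps (T + 1) -> zero_or_far eps (T - 1) ->
  regime_applies P r (T + d) -> regime_applies P r T.
Proof.
  intros He Hd g1 g2 g3 g4 H. unfold zero_or_far in *.
  destruct r; simpl in *; far_cases g1; far_cases g2; far_cases g3; far_cases g4; lra.
Qed.

Lemma open_band_perturb P r T d U e eps A : 0 < eps -> -eps/2 < d < eps/2 -> -eps/2 < e < eps/2 ->
  far_from_zero eps (U + 1) -> far_from_zero eps (U - 1) ->
  far_from_zero eps (U - T) -> far_from_zero eps (U - (1 - P)) -> far_from_zero eps (U - (-1 + P)) ->
  far_from_zero eps (U - (2 - P + T)) -> far_from_zero eps (U - (-2 + P + T)) ->
  band (cuts P r (T + d)) A (U + e) -> open_band (cuts P r T) A U.
Proof.
  intros He Hd Hee g0 g0' g1 g2 g3 g4 g5 H. unfold far_from_zero in *.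
  destruct r; destruct A as [|[|[|[|[|A]]]]]; simpl in *; try contradiction;
    far_cases1 g0; far_cases1 g0'; far_cases1 g1; far_cases1 g2; far_cases1 g3;
    far_cases1 g4; far_cases1 g5; lra.
Qed.

Lemma in_piece_shift P L T U1 U2 i j k :
  in_piece P L (T + 2 * IZR i, U1 + P * IZR i + 2 * IZR j, U2 + P * IZR i + 2 * IZR k) <->
  in_piece P L (T, U1, U2).
Proof.
  unfold in_piece. split; intros [i0 [j0 [k0 H]]]; cbv zeta in *.
  - exists (i0 - i)%Z, (j0 - j)%Z, (k0 - k)%Z. rewrite !minus_IZR.
    replace (T - 2 * (IZR i0 - IZR i)) with (T + 2 * IZR i - 2 * IZR i0) by ring.
    replace (U1 - P * (IZR i0 - IZR i) - 2 * (IZR j0 - IZR j))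
      with (U1 + P * IZR i + 2 * IZR j - P * IZR i0 - 2 * IZR j0) by ring.
    replace (U2 - P * (IZR i0 - IZR i) - 2 * (IZR k0 - IZR k))
      with (U2 + P * IZR i + 2 * IZR k - P * IZR i0 - 2 * IZR k0) by ring.
    exact H.
  - exists (i0 + i)%Z, (j0 + j)%Z, (k0 + k)%Z. rewrite !plus_IZR.
    replace (T + 2 * IZR i - 2 * (IZR i0 + IZR i)) with (T - 2 * IZR i0) by ring.
    replace (U1 + P * IZR i + 2 * IZR j - P * (IZR i0 + IZR i) - 2 * (IZR j0 + IZR j))
      with (U1 - P * IZR i0 - 2 * IZR j0) by ring.
    replace (U2 + P * IZR i + 2 * IZR k - P * (IZR i0 + IZR i) - 2 * (IZR k0 + IZR k))
      with (U2 - P * IZR i0 - 2 * IZR k0) by ring.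
    exact H.
Qed.

Lemma regime_exists P T : 0 < P < 1 -> -1 <= T <= 1 -> exists r, regime_applies P r T.
Proof.
  intros HP HT. destruct (Rle_lt_dec T (-1 + P)); [exists Reg1; simpl; lra|].
  destruct (Rle_lt_dec T (1 - P)); [exists Reg2 | exists Reg3]; simpl; lra.
Qed.

Lemma band_exists P r T U : -1 <= U <= 1 -> exists A, band (cuts P r T) A U.
Proof.
  intros HU. destruct (cuts P r T) as [[c1 c2] c3].
  destruct (Rle_lt_dec U c1); [exists 1%nat; simpl; lra|].
  destruct (Rle_lt_dec U c2); [exists 2%nat; simpl; lra|].
  destruct (Rle_lt_dec U c3); [exists 3%nat | exists 4%nat]; simpl; lra.
Qed.

Ltac gap_odd W := apply (odd_num_gap W); try assumption; parity W.
Ltac gap_even W := apply (int_num_gap W); try assumption; apply (int_num_even W); parity W.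

Section NearCenter.
Variable W : Z.
Hypothesis W_odd : exists M, W = (2 * M + 1)%Z.
Hypothesis W_pos : (0 < W)%Z.
Variables (P a u1 u2 : R).
Hypotheses (HP : 0 < P < 1) (Ha : 0 <= a < 1) (Hu1 : -1 < u1 < 1) (Hu2 : -1 < u2 < 1).
Hypotheses (EP : even_num W P) (Ia : int_num W a) (Eu1 : even_num W u1) (Eu2 : even_num W u2).

Let eps := / IZR W.

(* All cuts and coordinates of the point lie in [(1/W) Z] with prescribed parities,
   so the point is at distance at least [eps] from every cut it is not on. *)
Lemma in_piece_near_center (d1 d2 d3 : R) (L : edge -> Prop) :
  -eps/2 < d1 < eps/2 -> -eps/2 < d2 < eps/2 -> -eps/2 < d3 < eps/2 ->
  in_piece P L (2 * a + P - 1 + d1, u1 + d2, u2 + d3) ->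
  exists r A B, in_open_cell P r A B (2 * a + P - 1, u1, u2) /\
                (forall e, L e <-> rect_label r A B e).
Proof.
  intros Hd1 Hd2 Hd3 [i [j [k H]]]. cbv zeta in H.
  destruct H as [_ [_ [_ [r [A [B [Hr [HA [HB HL]]]]]]]]].
  pose proof (inv_W_pos W W_pos) as He. fold eps in He.
  exists r, A, B. split; [|exact HL].
  exists i, j, k. cbv zeta.
  set (T := 2 * a + P - 1 - 2 * IZR i).
  set (U1 := u1 - P * IZR i - 2 * IZR j).
  set (U2 := u2 - P * IZR i - 2 * IZR k).
  assert (ET : 2 * a + P - 1 + d1 - 2 * IZR i = T + d1) by (unfold T; ring).
  assert (EU1 : u1 + d2 - P * IZR i - 2 * IZR j = U1 + d2) by (unfold U1; ring).
  assert (EU2 : u2 + d3 - P * IZR i - 2 * IZR k = U2 + d3) by (unfold U2; ring).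
  rewrite ET in Hr, HA, HB. rewrite EU1 in HA. rewrite EU2 in HB.
  split; [|split].
  - apply (regime_applies_perturb P r T d1 eps He Hd1); try (unfold T; gap_even W). exact Hr.
  - apply (open_band_perturb P r T d1 U1 d2 eps A He Hd1 Hd2); try (unfold T, U1; gap_odd W). exact HA.
  - apply (open_band_perturb P r T d1 U2 d3 eps B He Hd1 Hd3); try (unfold T, U2; gap_odd W). exact HB.
Qed.

(* The closed cell of the perturbed point is, by [in_piece_near_center], the
   closure of an open cell of the centre, so it carries the same label. *)
Lemma in_piece_of_cell_labels (d1 d2 d3 : R) (L : edge -> Prop) :
  -eps/2 < d1 < eps/2 -> -eps/2 < d2 < eps/2 -> -eps/2 < d3 < eps/2 ->
  (forall r A B, in_open_cell P r A B (2 * a + P - 1, u1, u2) ->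
     forall e, L e <-> rect_label r A B e) ->
  in_piece P L (2 * a + P - 1 + d1, u1 + d2, u2 + d3).
Proof.
  intros Hd1 Hd2 Hd3 HG.
  pose proof (inv_W_pos W W_pos) as He. fold eps in He.
  assert (gP : zero_or_far eps P) by (gap_even W).
  assert (gu1 : far_from_zero eps (u1 - 1)) by (gap_odd W).
  assert (gu1' : far_from_zero eps (u1 + 1)) by (gap_odd W).
  assert (gu2 : far_from_zero eps (u2 - 1)) by (gap_odd W).
  assert (gu2' : far_from_zero eps (u2 + 1)) by (gap_odd W).
  unfold zero_or_far, far_from_zero in *.
  far_cases gP. far_cases1 gu1; far_cases1 gu1'; far_cases1 gu2; far_cases1 gu2'.
  assert (Hi : exists i : Z, -1 <= 2 * a + P - 1 + d1 - 2 * IZR i <= 1 /\ 0 <= IZR i <= 1).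
  { destruct (Rle_lt_dec (2 * a + P - 1 + d1) 1); [exists 0%Z | exists 1%Z]; simpl; lra. }
  destruct Hi as [i [Hi HiR]].
  assert (Hshift : forall x, -3 <= x <= 1 -> exists j : Z, -1 <= x - 2 * IZR j <= 1).
  { intros x Hx. destruct (Rle_lt_dec (-1) x); [exists 0%Z | exists (-1)%Z]; simpl; lra. }
  destruct (Hshift (u1 + d2 - P * IZR i)) as [j Hj]; [nra|].
  destruct (Hshift (u2 + d3 - P * IZR i)) as [k Hk]; [nra|].
  set (T' := 2 * a + P - 1 + d1 - 2 * IZR i) in *.
  destruct (regime_exists P T' HP Hi) as [r Hr].
  destruct (band_exists P r T' _ Hj) as [A HA].
  destruct (band_exists P r T' _ Hk) as [B HB].
  assert (Hpc : in_piece P (rect_label r A B) (2 * a + P - 1 + d1, u1 + d2, u2 + d3)).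
  { exists i, j, k. cbv zeta. refine (conj Hi (conj Hj (conj Hk _))).
    exists r, A, B. exact (conj Hr (conj HA (conj HB (fun e => iff_refl _)))). }
  destruct (in_piece_near_center d1 d2 d3 _ Hd1 Hd2 Hd3 Hpc) as [r' [A' [B' [Hcell Heq]]]].
  exists i, j, k. cbv zeta. refine (conj Hi (conj Hj (conj Hk _))).
  exists r, A, B. refine (conj Hr (conj HA (conj HB _))).
  intros e. rewrite (HG _ _ _ Hcell), Heq. reflexivity.
Qed.

End NearCenter.

Lemma even_rational_param_odd_sum p q : even_rational_param p q ->
  exists M, Z.of_nat (p + q) = (2 * M + 1)%Z.
Proof.
  intros [Hp [Hpq [Hg He]]].
  assert (Ho : Nat.odd (p + q) = true).
  { rewrite <- Nat.negb_even, Nat.even_add.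
    destruct (Nat.even p) eqn:Ep; destruct (Nat.even q) eqn:Eq; try reflexivity; exfalso.
    - apply Nat.even_spec in Ep as [x Hx]. apply Nat.even_spec in Eq as [y Hy].
      assert (Hd : Nat.divide 2 (Nat.gcd p q)) by (apply Nat.gcd_greatest; [exists x | exists y]; lia).
      rewrite Hg in Hd. destruct Hd as [z Hz]. lia.
    - apply Nat.even_spec in He. rewrite Nat.even_mul, Ep, Eq in He. discriminate. }
  apply Nat.odd_spec in Ho as [M HM]. exists (Z.of_nat M). lia.
Qed.

Lemma frac_regime_cases (P a : R) : 0 <= a ->
  a = 0 \/ 0 < a < 1 - P \/ a = 1 - P \/ (1 - P < a /\ 2 * a + P - 2 <> 0) \/ 2 * a + P - 2 = 0.
Proof.
  intros Ha. destruct (Req_dec a 0); [left; assumption|].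
  destruct (Rlt_le_dec a (1 - P)); [right; left; lra|].
  destruct (Req_dec a (1 - P)); [right; right; left; assumption|].
  destruct (Req_dec (2 * a + P - 2) 0); [right; right; right; right; assumption|].
  right; right; right; left. split; [lra|assumption].
Qed.

Section Main.
Variables (p q : nat) (m n : Z).
Hypothesis Hpar : even_rational_param p q.

Let P := Ppar p q.
Let Q := Qpar p q.
Let W := Z.of_nat (p + q).
Let a := frac_part (P * IZR m).
Let U1 := center_U1 P m n.
Let U2 := center_U2 P m n.

Lemma omega_eq_IZR : omega p q = IZR W.
Proof. unfold omega, W. rewrite <- INR_IZR_INZ, plus_INR. reflexivity. Qed.

Lemma sum_pos : (0 < W)%Z.
Proof. destruct Hpar as [Hp _]. unfold W. lia. Qed.

Lemma sum_odd : exists M, W = (2 * M + 1)%Z.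
Proof. exact (even_rational_param_odd_sum p q Hpar). Qed.

Lemma Ppar_bounds : 0 < P < 1.
Proof.
  destruct Hpar as [Hp [Hpq _]].
  assert (0 < INR p) by (apply lt_0_INR; lia).
  assert (INR p < INR q) by (apply lt_INR; lia).
  unfold P, Ppar, omega. split; [apply Rdiv_lt_0_compat; lra|].
  apply Rmult_lt_reg_r with (INR p + INR q); [lra|].
  replace (2 * INR p / (INR p + INR q) * (INR p + INR q)) with (2 * INR p) by (field; lra). lra.
Qed.

Lemma Qpar_eq : Q = 2 - P.
Proof.
  destruct Hpar as [Hp _]. assert (0 < INR p) by (apply lt_0_INR; lia).
  assert (0 <= INR q) by apply pos_INR.
  unfold Q, P, Qpar, Ppar, omega. field. lra.
Qed.

Lemma Ppar_even : even_num W P.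
Proof.
  exists (Z.of_nat p). rewrite <- omega_eq_IZR, <- INR_IZR_INZ.
  destruct Hpar as [Hp _]. assert (0 < INR p) by (apply lt_0_INR; lia).
  assert (0 <= INR q) by apply pos_INR.
  unfold P, Ppar, omega. field. lra.
Qed.

Lemma frac_Ppar_int : int_num W a.
Proof.
  destruct Ppar_even as [N HN].
  exists (2 * N * m - Int_part (P * IZR m) * W)%Z. push_IZR. unfold a, frac_part.
  replace (IZR 2) with 2 by reflexivity. nra.
Qed.

Lemma center_U1_even : even_num W U1.
Proof.
  pose proof Ppar_even. pose proof frac_Ppar_int. unfold U1, center_U1. fold a. parity W.
Qed.

Lemma center_U2_even : even_num W U2.
Proof.
  pose proof Ppar_even. pose proof frac_Ppar_int. unfold U2, center_U2. fold a. parity W.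
Qed.

(* [U1] and [U2] are even over [W] while [1] is odd, so the value [1] is excluded. *)
Lemma center_U_bounds : -1 < U1 < 1 /\ -1 < U2 < 1.
Proof.
  pose proof sum_odd. pose proof sum_pos. pose proof center_U1_even. pose proof center_U2_even.
  assert (U1 <> 1) by (apply (odd_num_neq W); [assumption|parity W]).
  assert (U2 <> 1) by (apply (odd_num_neq W); [assumption|parity W]).
  assert (-1 < U1 <= 1) by apply red2_bounds.
  assert (-1 < U2 <= 1) by apply red2_bounds.
  lra.
Qed.

Ltac cell_side W :=
  first [ assumption
        | match goal with
          | |- reduces_to _ (red2 _) => apply reduces_to_red2; [unfold a, U1, U2; ring | lra]
          | |- _ <> 0 => apply (odd_num_neq0 W); [assumption | parity W]
          | |- _ <> _ => apply (odd_num_neq W); [assumption | parity W]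
          end ].

Ltac main_facts :=
  pose proof Ppar_bounds; pose proof Qpar_eq; pose proof sum_pos; pose proof sum_odd;
  pose proof Ppar_even; pose proof frac_Ppar_int; pose proof center_U1_even; pose proof center_U2_even;
  destruct center_U_bounds; assert (0 <= a < 1) by (pose proof (base_fp (P * IZR m)); unfold a; lra).

Section Cell.
Variables (r : regime) (A B : nat).
Hypothesis Hcell : in_open_cell P r A B (2 * a + P - 1, U1, U2).

Lemma good_W_label : good P Q (Vseg m n) <-> rect_label r A B eW.
Proof.
  main_facts.
  rewrite good_W_iff by cell_side W.
  apply (cell_label_W P a U1 U2); cell_side W.
Qed.

Lemma good_E_label : good P Q (Vseg (m + 1) n) <-> rect_label r A B eE.
Proof.
  main_facts.
  destruct (Rlt_le_dec (a + P) 1).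
  - rewrite good_E_lo_iff by cell_side W.
    apply (cell_label_E_lo P a U1 U2); cell_side W.
  - rewrite good_E_hi_iff by cell_side W.
    apply (cell_label_E_hi P a U1 U2); cell_side W.
Qed.

Ltac rewrite_row_values e :=
  let Hv := fresh "Hv" in
  pose proof (row_values P m n e) as Hv; cbv zeta in Hv;
  let E1 := fresh in let E2 := fresh in let E3 := fresh in let E4 := fresh in let E5 := fresh in
  destruct Hv as (E1 & E2 & E3 & E4 & E5); rewrite ?E1, ?E2, ?E3, ?E4, ?E5.

Ltac solve_row e label_zero label_below label_at label_above label_mid :=
  main_facts;
  destruct (frac_regime_cases P a ltac:(lra)) as [Ha|[Ha|[Ha|[[Ha Ha']|Ha]]]];
  [ rewrite good_Hseg_zero by assumption; rewrite_row_values e; apply (label_zero P a U1 U2); cell_side W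
  | rewrite good_Hseg_below by assumption; rewrite_row_values e; apply (label_below P a U1 U2); cell_side W
  | rewrite good_Hseg_at by assumption; rewrite_row_values e; apply (label_at P a U1 U2); cell_side W
  | rewrite good_Hseg_above by assumption; rewrite_row_values e; apply (label_above P a U1 U2); cell_side W
  | assert (~ good P Q (Hseg m (n + e))) by (apply not_good_Hseg_mid; assumption);
    match goal with |- _ <-> ?L =>
      assert (~ L) by (apply (label_mid P a U1 U2 r A B) with (h := red2 (2 * P * IZR (n + e)));
                       try assumption; rewrite_row_values e; cell_side W) end;
    tauto ].

Lemma good_N_label : good P Q (Hseg m (n + 1)) <-> rect_label r A B eN.
Proof.
  solve_row 1%Z cell_label_N_zero cell_label_N_below cell_label_N_at cell_label_N_above
    cell_label_N_mid.
Qed.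

Lemma good_S_label : good P Q (Hseg m n) <-> rect_label r A B eS.
Proof.
  replace (Hseg m n) with (Hseg m (n + 0)) by (f_equal; ring).
  solve_row 0%Z cell_label_S_zero cell_label_S_below cell_label_S_at cell_label_S_above
    cell_label_S_mid.
Qed.

Lemma good_iff_rect_label e : good P Q (edge_seg m n e) <-> rect_label r A B e.
Proof.
  destruct e; simpl edge_seg.
  - exact good_N_label.
  - exact good_S_label.
  - exact good_E_label.
  - exact good_W_label.
Qed.

End Cell.

Lemma in_piece_interior_Xi_center :
  in_piece_interior P (fun e => good P Q (edge_seg m n e)) (Xi P (center m n)).
Proof.
  main_facts. pose proof (inv_W_pos W sum_pos) as He.
  destruct (Xi_center P m n) as [i [j [k EXi]]]. fold a U1 U2 in EXi.
  unfold in_piece_interior. rewrite EXi. exists (/ IZR W / 2). split; [lra|].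
  intros T' U1' U2' HT HU1 HU2.
  apply Rabs_def2 in HT. apply Rabs_def2 in HU1. apply Rabs_def2 in HU2.
  replace T' with (2 * a + P - 1 + (T' - (2 * a + P - 1 + 2 * IZR i)) + 2 * IZR i) by ring.
  replace U1' with (U1 + (U1' - (U1 + P * IZR i + 2 * IZR j)) + P * IZR i + 2 * IZR j) by ring.
  replace U2' with (U2 + (U2' - (U2 + P * IZR i + 2 * IZR k)) + P * IZR i + 2 * IZR k) by ring.
  rewrite in_piece_shift.
  apply (in_piece_of_cell_labels W); try assumption; try lra.
  intros r A B Hcell e. exact (good_iff_rect_label r A B Hcell e).
Qed.

Lemma in_piece_interior_Xi_center_labels (L : edge -> Prop) :
  in_piece_interior P L (Xi P (center m n)) -> forall e, L e <-> good P Q (edge_seg m n e).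
Proof.
  main_facts. pose proof (inv_W_pos W sum_pos) as He.
  destruct (Xi_center P m n) as [i [j [k EXi]]]. fold a U1 U2 in EXi.
  unfold in_piece_interior. rewrite EXi. intros [eps [Heps Hint]].
  assert (Hzero : forall x, Rabs (x - x) < eps) by (intros; rewrite Rminus_diag, Rabs_R0; exact Heps).
  pose proof (Hint _ _ _ (Hzero _) (Hzero _) (Hzero _)) as Hpc.
  rewrite <- (Rplus_0_r (2 * a + P - 1)), <- (Rplus_0_r U1), <- (Rplus_0_r U2), in_piece_shift in Hpc.
  destruct (in_piece_near_center W sum_odd sum_pos P a U1 U2 Ppar_even frac_Ppar_int
              center_U1_even center_U2_even 0 0 0 L ltac:(lra) ltac:(lra) ltac:(lra) Hpc)
    as [r [A [B [Hcell HL]]]].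
  intros e. rewrite HL. symmetry. exact (good_iff_rect_label r A B Hcell e).
Qed.

End Main.

Theorem theorem3p3 (p q : nat) (m n : Z) :
  even_rational_param p q ->
  exists L : edge -> Prop,
    in_piece_interior (Ppar p q) L (Xi (Ppar p q) (center m n)) /\
    (forall L' : edge -> Prop,
       in_piece_interior (Ppar p q) L' (Xi (Ppar p q) (center m n)) ->
       forall e, L' e <-> L e) /\
    (forall e : edge, good (Ppar p q) (Qpar p q) (edge_seg m n e) <-> L e).
Proof.
  intros Hpar. exists (fun e => good (Ppar p q) (Qpar p q) (edge_seg m n e)).
  split; [|split].
  - exact (in_piece_interior_Xi_center p q m n Hpar).
  - exact (in_piece_interior_Xi_center_labels p q m n Hpar).
  - reflexivity.
Qed.
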